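(* Let $f\colon X\to X$ be a homeomorphism of a metric space $X$ and $\mu$ a Borel probability measure inner-distal with respect to $f$. If $f$ is asymptotically expansive, then $\mu$ is positively meagre-expansive. If $f$ is bi-asymptotically expansive, then $\mu$ is meagre-expansive.
   Context: $\mathcal{P}(x)=\{y\colon \inf_{n\in\mathbb{Z}} d(f^n(x),f^n(y))=0\}$; $\mu$ is inner-distal if $\mu(\operatorname{Int}\mathcal{P}(x))=0$ for all $x$. $f$ is asymptotically expansive if there is $\delta>0$ such that $d(f^n(x),f^n(y))\le\delta$ for all $n\ge0$ implies $\lim_{n\to\infty}d(f^n(x),f^n(y))=0$; $f$ is bi-asymptotically expansive if $f$ and $f^{-1}$ are asymptotically expansive. $\Gamma^+_\delta(x)=\{y\colon d(f^n(x),f^n(y))\le\delta\ \forall n\ge0\}$ and $\Gamma_\delta(x)=\{y\colon d(f^n(x),f^n(y))\le\delta\ \forall n\in\mathbb{Z}\}$. $\mu$ is positively meagre-expansive (resp. meagre-expansive) if there is $\delta>0$ with $\mu(\operatorname{Int}\Gamma^+_\delta(x))=0$ (resp. $\mu(\operatorname{Int}\Gamma_\delta(x))=0$) for all $x\in X$. *)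

From HB Require Import structures.
From mathcomp Require Import all_boot all_order all_algebra.
From mathcomp Require Import all_classical all_reals all_analysis.
Set Implicit Arguments. Unset Strict Implicit. Unset Printing Implicit Defensive.
Import Order.TTheory GRing.Theory Num.Theory.
Local Open Scope classical_set_scope.
Local Open Scope ring_scope.

(* A metric space with a distinguished point (needed only because
   MathComp-Analysis measurable types are pointed; a space carrying a
   probability measure is nonempty anyway). *)
#[short(type="pointedMetricType")]
HB.structure Definition PointedMetric (K : numDomainType) :=
  { T of Pointed T & Metric K T }.

Section Defs.
Context {R : realType} {X : pointedMetricType R}.

Definition borel_type := g_sigma_algebraType (@open X).

Variables (f g : X -> X). (* g is the inverse of the homeomorphism f *)

Definition iterz (n : int) : X -> X :=
  match n with
  | Posz k => iter k f
  | Negz k => iter k.+1 g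
  end.

Let d := @mdist R X.

Definition Pset (x : X) : set X :=
  [set y | inf (range (fun n : int => d (iterz n x) (iterz n y))) = 0].

Definition Gamma_plus (delta : R) (x : X) : set X :=
  [set y | forall n : nat, d (iter n f x) (iter n f y) <= delta].

Definition Gamma (delta : R) (x : X) : set X :=
  [set y | forall n : int, d (iterz n x) (iterz n y) <= delta].

Definition inner_distal (mu : set borel_type -> \bar R) : Prop :=
  forall x : X, mu (interior (Pset x)) = 0%E.

Definition positively_meagre_expansive (mu : set borel_type -> \bar R) : Prop :=
  exists2 delta : R, 0 < delta &
    forall x : X, mu (interior (Gamma_plus delta x)) = 0%E.

Definition meagre_expansive (mu : set borel_type -> \bar R) : Prop :=
  exists2 delta : R, 0 < delta &
    forall x : X, mu (interior (Gamma delta x)) = 0%E.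

End Defs.

Definition asymptotically_expansive {R : realType} {X : pointedMetricType R}
    (h : X -> X) : Prop :=
  exists2 delta : R, 0 < delta &
    forall x y : X,
      (forall n : nat, mdist (iter n h x) (iter n h y) <= delta) ->
      (fun n : nat => mdist (iter n h x) (iter n h y)) @ \oo --> (0 : R^o).

(* f bi-asymptotically expansive, g being the inverse of f *)
Definition bi_asymptotically_expansive {R : realType} {X : pointedMetricType R}
    (f g : X -> X) : Prop :=
  asymptotically_expansive f /\ asymptotically_expansive g.

From HB Require Import structures.
From mathcomp Require Import all_boot all_order all_algebra.
From mathcomp Require Import all_classical all_reals all_analysis.
Import Order.TTheory GRing.Theory Num.Theory.
Local Open Scope classical_set_scope.
Local Open Scope ring_scope.

(* Asymptotic expansivity with constant delta says exactly that two forward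
   orbits staying delta-close are asymptotic, so Gamma_delta(x) is contained in
   Gamma^+_delta(x), which is contained in P(x). Interiors of open sets being
   Borel, monotonicity of mu and inner-distality give mu(Int Gamma) = 0. *)

Lemma inf_range_eq0 (R : realType) (T : Type) (h : T -> R) :
  (forall i, 0 <= h i) -> (forall e, 0 < e -> exists i, h i < e) ->
  inf (range h) = 0.
Proof.
move=> h_ge0 h_small.
have lb0 : lbound (range h) 0 by move=> _ [i _ <-].
have [i _] := h_small 1 ltr01.
apply/eqP; rewrite eq_le lb_le_inf ?andbT; last 2 first.
- by exists (h i), i.
- exact: lb0.
rewrite leNgt; apply/negP => inf_gt0.
have [j hj] := h_small _ inf_gt0.
have hj_in : range h (h j) by exists j.
by move: (ge_inf (ex_intro _ 0 lb0) hj_in); rewrite leNgt hj.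
Qed.

Lemma open_measurable_borel (R : realType) (X : pointedMetricType R)
    (A : set X) :
  open A -> measurable (A : set (borel_type (X := X))).
Proof. exact: sub_sigma_algebra. Qed.

Section OrbitSets.
Context {R : realType} {X : pointedMetricType R} {f g : X -> X}.

Lemma Gamma_sub_Gamma_plus (delta : R) (x : X) :
  Gamma f g delta x `<=` Gamma_plus f delta x.
Proof. by move=> y y_close n; exact: (y_close (Posz n)). Qed.

Lemma Pset_of_forward_asymptotic (x y : X) :
  (fun n : nat => mdist (iter n f x) (iter n f y)) @ \oo --> (0 : R^o) ->
  Pset f g x y.
Proof.
move=> /cvgrPdist_lt asym; apply: inf_range_eq0 => [n|e e_gt0].
  exact: mdist_ge0.
have [N _ closeN] := asym e e_gt0.
exists (Posz N); have := closeN N (leqnn N).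
by rewrite sub0r normrN ger0_norm // mdist_ge0.
Qed.

Lemma Gamma_plus_sub_Pset {delta : R} :
  (forall x y : X,
      (forall n : nat, mdist (iter n f x) (iter n f y) <= delta) ->
      (fun n : nat => mdist (iter n f x) (iter n f y)) @ \oo --> (0 : R^o)) ->
  forall x, Gamma_plus f delta x `<=` Pset f g x.
Proof. by move=> asym x y /asym; exact: Pset_of_forward_asymptotic. Qed.

Lemma inner_distal_interior_sub_Pset
    {mu : {measure set borel_type (X := X) -> \bar R}} {A : set X} {x : X} :
  inner_distal f g mu -> A `<=` Pset f g x -> mu (interior A) = 0%E.
Proof.
move=> distal AP; apply/eqP; rewrite eq_le measure_ge0 andbT -(distal x).
have int_meas (B : set X) : measurable (interior B : set borel_type).
  by apply: open_measurable_borel; exact: open_interior.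
by apply: le_measure; rewrite ?inE ?int_meas //; exact: interiorS.
Qed.

End OrbitSets.

Theorem lemma3p6 (R : realType) (X : pointedMetricType R) (f g : X -> X)
  (f_cont : continuous f) (g_cont : continuous g)
  (fgK : cancel f g) (gfK : cancel g f)
  (mu : probability (borel_type (X := X)) R) :
  inner_distal f g mu ->
  (asymptotically_expansive f -> positively_meagre_expansive f mu) /\
  (bi_asymptotically_expansive f g -> meagre_expansive f g mu).
Proof.
move=> distal; split.
  move=> [delta delta_gt0 asym]; exists delta => // x.
  exact: (inner_distal_interior_sub_Pset distal (Gamma_plus_sub_Pset asym x)).
move=> [[delta delta_gt0 asym] _]; exists delta => // x.
apply: (inner_distal_interior_sub_Pset distal).
exact: subset_trans (@Gamma_sub_Gamma_plus _ _ f g delta x) (Gamma_plus_sub_Pset asym x).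
Qed.
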